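(* Let $m$ be an even non-negative integer and let $d_2$ be an $(m+3)\times(m+3)$ alternating matrix over a commutative ring, partitioned as $d_2=\begin{bmatrix}\varphi&\psi^T\\-\psi&\Phi\end{bmatrix}$ with $\varphi$ an $m\times m$ alternating matrix, $\Phi$ a $3\times3$ alternating matrix, and $\psi$ a $3\times m$ matrix. Then for each $\ell\in\{1,2,3\}$, $$\operatorname{Pf}_{m+\ell}(d_2)=\operatorname{Pf}_\ell(\psi\check\varphi\psi^T)+\operatorname{Pf}(\varphi)\operatorname{Pf}_\ell(\Phi).$$
   Context: An $s\times s$ matrix is alternating if it is skew-symmetric with zero diagonal. $\operatorname{Pf}$ is the Pfaffian ($0$ for odd size, $1$ for the empty matrix). For an odd-size alternating $\varphi$, $\operatorname{Pf}_\ell(\varphi)=(-1)^{\ell+1}\operatorname{Pf}(\varphi$ with row and column $\ell$ deleted$)$. For an even-size alternating $\varphi$, $\check\varphi$ is the alternating matrix with $(\check\varphi)_{i,j}=(-1)^{i+j}\operatorname{Pf}(\varphi$ with rows and columns $i,j$ deleted$)$ for $i<j$, zero diagonal, and $(\check\varphi)_{j,i}=-(\check\varphi)_{i,j}$ (when $m=0$, $\check\varphi$ is empty and the first term is $0$). *)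

From HB Require Import structures.
From mathcomp Require Import all_boot all_order all_algebra.
Set Implicit Arguments. Unset Strict Implicit. Unset Printing Implicit Defensive.
Import Order.TTheory GRing.Theory Num.Theory.
Local Open Scope ring_scope.

Section Pfaffian.
Variable R : comPzRingType.

(* The empty list gives 1, a list of odd length gives 0.  The nat argument is
   fuel (size s suffices). *)
Fixpoint pf_fuel (T : Type) (A : T -> T -> R) (n : nat) (s : seq T) : R :=
  match s, n with
  | [::], _ => 1
  | _ :: _, 0%N => 0
  | i :: t, n'.+1 =>
      \sum_(k < size t)
        (-1) ^+ k * A i (nth i t k) * pf_fuel A n' (take k t ++ drop k.+1 t)
  end.

Definition pf_seq (T : Type) (A : T -> T -> R) (s : seq T) : R :=
  pf_fuel A (size s) s.

Definition alternating (n : nat) (M : 'M[R]_n) : Prop :=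
  (forall i j, M j i = - M i j) /\ (forall i, M i i = 0).

Definition Pf (n : nat) (M : 'M[R]_n) : R := pf_seq (fun i j => M i j) (enum 'I_n).

Definition Pf_del (n : nat) (M : 'M[R]_n) (S : seq 'I_n) : R :=
  pf_seq (fun i j => M i j) [seq i <- enum 'I_n | i \notin S].

(* Pf_l(M) = (-1)^(l+1) Pf(M with row/column l deleted), where l = i.+1 is the
   1-based index of the 0-based ordinal i. *)
Definition Pfl (n : nat) (M : 'M[R]_n) (i : 'I_n) : R :=
  (-1) ^+ (i.+1).+1 * Pf_del M [:: i].

(* check(M)_{ij} = (-1)^(i+j) Pf(M with rows/cols i,j deleted) for i<j,
   zero diagonal, skew-symmetric.  (Shifting to 0-based indices does not change
   the parity of i+j.) *)
Definition pf_check (n : nat) (M : 'M[R]_n) : 'M[R]_n :=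
  \matrix_(i, j)
    if (i < j)%N then (-1) ^+ (i + j) * Pf_del M [:: i; j]
    else if (j < i)%N then - ((-1) ^+ (j + i) * Pf_del M [:: j; i])
    else 0.

End Pfaffian.

From HB Require Import structures.
From mathcomp Require Import all_boot all_order all_algebra.
From mathcomp Require Import zify ring.
Set Implicit Arguments. Unset Strict Implicit. Unset Printing Implicit Defensive.
Import GRing.Theory.
Local Open Scope ring_scope.

(* Deleting row and column m+l of d2 leaves phi bordered by the rows a < b of
   psi other than l, with corner Phi_ab.  Expand that Pfaffian along its last
   two rows: pairing the two border rows with each other gives Phi_ab Pf(phi);
   pairing the last one with i and the other with p <> i gives
   psi_bi psi_ap times the signed Pfaffian of phi with rows i, p deleted, which
   is the (p, i) entry of check(phi), so these terms add up to
   (psi check(phi) psi^T)_ab.  Evenness of m only matches the signs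
   (-1)^(m+l+1) and (-1)^(l+1). *)

Lemma bump0 i : bump 0 i = i.+1. Proof. by []. Qed.

Lemma unbump_bump_swap k i : unbump (bump k i) k = unbump i k.
Proof.
rewrite /unbump /bump; case: (leqP k i) => h /=.
  by rewrite add1n ltnNge (leqW h).
by rewrite add0n h.
Qed.

Section PfaffianExpansion.
Variable R : comPzRingType.

Fixpoint pfaff (n : nat) (B : nat -> nat -> R) {struct n} : R :=
  match n with
  | 0 => 1
  | 1 => 0
  | n'.+2 => \sum_(k < n'.+1) (-1) ^+ k * B 0%N k.+1 *
      pfaff n' (fun a b => B (bump k a).+1 (bump k b).+1)
  end.

Lemma eq_pfaff n (B B' : nat -> nat -> R) :
  (forall a b : 'I_n, B a b = B' a b) -> pfaff n B = pfaff n B'.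
Proof.
elim/ltn_ind: n B B' => -[|[|n]] IH B B' eqB //=.
apply: eq_bigr => k _; rewrite (eqB ord0 (lift ord0 k)); congr (_ * _).
apply: IH => // a b; exact: (eqB (lift ord0 (lift k a)) (lift ord0 (lift k b))).
Qed.

Lemma pfaffS n (B : nat -> nat -> R) :
  pfaff n.+1 B = \sum_(k < n) (-1) ^+ k * B 0%N k.+1 *
    pfaff n.-1 (fun a b => B (bump k a).+1 (bump k b).+1).
Proof. by case: n => [|n]; rewrite ?big_ord0. Qed.

#[global] Arguments pfaff : simpl never.

Lemma pfaff2 (B : nat -> nat -> R) : pfaff 2 B = B 0%N 1%N.
Proof. by rewrite pfaffS big_ord1 expr0 mul1r mulr1. Qed.

Lemma exchange_big_offdiag n (F : 'I_n -> 'I_n -> R) :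
  \sum_(k < n) \sum_(i < n.-1) F k (lift k i) =
  \sum_(j < n) \sum_(i < n.-1) F (lift j i) j.
Proof.
have row k : \sum_(i < n.-1) F k (lift k i) = \sum_j F k j - F k k.
  by rewrite [X in _ = X - _](bigD1_ord k) //= addrC addrK.
have col j : \sum_(i < n.-1) F (lift j i) j = \sum_k F k j - F j j.
  by rewrite [X in _ = X - _](bigD1_ord j) //= addrC addrK.
by rewrite (eq_bigr _ (fun k _ => row k)) (eq_bigr _ (fun j _ => col j)) !sumrB exchange_big.
Qed.

Lemma signr_odd_eq x y : odd x = odd y -> (-1) ^+ x = (-1) ^+ y :> R.
Proof. by move=> h; rewrite -signr_odd h signr_odd. Qed.

Lemma pfaff_expand_last n (B : nat -> nat -> R) : pfaff n.+1 B =
  \sum_(i < n) (-1) ^+ (i + n.+1) * B i n * pfaff n.-1 (fun a b => B (bump i a) (bump i b)).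
Proof.
elim/ltn_ind: n B => -[|[|n]] IH B; first by rewrite big_ord0.
  by rewrite big_ord1 pfaffS big_ord1 !mulr1 expr0 expr2 mulrNN !mul1r.
rewrite pfaffS big_ord_recr [RHS]big_ord_recl /= addrC; congr (_ + _).
  rewrite add0n !exprS !mulN1r opprK; congr (_ * _); apply: eq_pfaff => a b.
  by rewrite /bump !add1n leqNgt (ltn_ord a) leqNgt (ltn_ord b).
(* Both sides sum F over the pairs a <> b where the first row is matched with
   a.+1 and the last row with b.+1. *)
pose F (a b : 'I_n.+1) :=
  (-1) ^+ (a + b + n + (b < a)%N) * B 0%N a.+1 * B b.+1 n.+2 *
  pfaff n.-1 (fun x y => B (bump b (bump (unbump b a) x)).+1
                           (bump b (bump (unbump b a) y)).+1).
transitivity (\sum_(k < n.+1) \sum_(i < n) F k (lift k i)).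
  apply: eq_bigr => k _; rewrite IH // big_distrr; apply: eq_bigr => i _ /=.
  have -> : bump k n = n.+1 by rewrite /bump -ltnS ltn_ord.
  rewrite /F /= !mulrA [_ * B 0%N _ * _]mulrAC -exprD; congr (_ * _ * _ * _).
    apply: signr_odd_eq; rewrite /bump.
    by case: (leqP k i) => /= h; [rewrite ltnNge leqW | rewrite h]; lia.
  apply: eq_pfaff => x y.
  by rewrite [bump k (bump i x)]bumpC [bump k (bump i y)]bumpC /= unbump_bump_swap.
rewrite (exchange_big_offdiag F); apply: eq_bigr => j _.
rewrite pfaffS big_distrr; apply: eq_bigr => k _ /=.
have -> : bump j.+1 0 = 0%N by [].
rewrite /F /= !bump0 !mulrA [(-1) ^+ _ * B j.+1 n.+2 * _]mulrAC -exprD bumpK.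
rewrite [_ * B j.+1 n.+2 * B 0%N _]mulrAC bumpS; congr (_ * _ * _ * _).
  apply: signr_odd_eq; rewrite /bump.
  by case: (leqP j k) => /= h; [rewrite ltnS h | rewrite ltnNge ltnW]; lia.
by apply: eq_pfaff => x y; rewrite !bumpS.
Qed.

Lemma pfaff_expand_last2 m (B : nat -> nat -> R) :
  pfaff m.+2 B = B m m.+1 * pfaff m B +
  \sum_(i < m) \sum_(j < m.-1) (-1) ^+ (i + j) * B i m.+1 * B (bump i j) m *
     pfaff m.-2 (fun a b => B (bump i (bump j a)) (bump i (bump j b))).
Proof.
rewrite pfaff_expand_last big_ord_recr /= addrC; congr (_ + _).
  rewrite (@signr_odd_eq _ 0) ?expr0 ?mul1r; last by rewrite !addnS /= negbK addnn odd_double.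
  congr (_ * _); apply: eq_pfaff => a b.
  by rewrite /bump leqNgt (ltn_ord a) leqNgt (ltn_ord b).
case: m => [|m]; first by rewrite !big_ord0.
apply: eq_bigr => i _; rewrite pfaff_expand_last big_distrr; apply: eq_bigr => j _ /=.
have -> : bump i m = m.+1 by rewrite /bump -ltnS ltn_ord.
rewrite !mulrA [_ * B i _ * _]mulrAC -exprD; congr (_ * _ * _ * _).
apply: signr_odd_eq; have -> : (i + m.+3 + (j + m.+1) = i + j + (m.+2).*2)%N by lia.
by rewrite oddD odd_double addbF.
Qed.

End PfaffianExpansion.

Section MatrixPfaffians.
Variable R : comPzRingType.

Definition mx_nat m n (M : 'M[R]_(m, n)) (a b : nat) : R :=
  match insub a, insub b with Some i, Some j => M i j | _, _ => 0 end.

Lemma mx_natE m n (M : 'M[R]_(m, n)) (i : 'I_m) (j : 'I_n) : mx_nat M i j = M i j.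
Proof. by rewrite /mx_nat !valK. Qed.

Lemma size_take_drop T (t : seq T) k : (k < size t)%N ->
  size (take k t ++ drop k.+1 t) = (size t).-1.
Proof. by move=> hk; rewrite size_cat size_take hk size_drop; lia. Qed.

Lemma nth_take_drop T (x0 : T) t k a : (k < size t)%N ->
  nth x0 (take k t ++ drop k.+1 t) a = nth x0 t (bump k a).
Proof.
move=> hk; rewrite nth_cat size_take hk /bump.
by case: ltnP => ha; [rewrite nth_take | rewrite nth_drop add1n addSn subnKC].
Qed.

Lemma filter_predC1_nth (T : eqType) (x0 : T) s k : uniq s -> (k < size s)%N ->
  filter (predC1 (nth x0 s k)) s = take k s ++ drop k.+1 s.
Proof. by move=> s_uniq hk; rewrite -rem_filter // remE index_uniq. Qed.

Lemma pf_fuel_pfaff T (A : T -> T -> R) (x0 : T) f s : (size s <= f)%N ->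
  pf_fuel A f s = pfaff (size s) (fun a b => A (nth x0 s a) (nth x0 s b)).
Proof.
elim: f s => [|f IH] [|i t] //= hs; rewrite pfaffS; apply: eq_bigr => k _ /=.
have k_lt := ltn_ord k.
rewrite (set_nth_default x0 i) // IH size_take_drop //; last by lia.
by congr (_ * _); apply: eq_pfaff => a b; rewrite !nth_take_drop.
Qed.

Lemma filter_enum_predC1 n (c : 'I_n) :
  filter (predC1 c) (enum 'I_n) = take c (enum 'I_n) ++ drop c.+1 (enum 'I_n).
Proof. by rewrite -{1}(nth_ord_enum c c) filter_predC1_nth ?enum_uniq ?size_enum_ord. Qed.

Lemma Pf_pfaff n (M : 'M[R]_n) : Pf M = pfaff n (mx_nat M).
Proof.
case: n M => [|n] M; first by rewrite /Pf /pf_seq enum_ord0.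
rewrite /Pf /pf_seq (pf_fuel_pfaff _ ord0) // size_enum_ord.
by apply: eq_pfaff => a b; rewrite !nth_ord_enum mx_natE.
Qed.

Lemma Pf_del1_pfaff n (M : 'M[R]_n) (c : 'I_n) :
  Pf_del M [:: c] = pfaff n.-1 (fun a b => mx_nat M (bump c a) (bump c b)).
Proof.
rewrite /Pf_del /pf_seq (@eq_filter _ _ (predC1 c)) => [|i]; last by rewrite !inE.
rewrite filter_enum_predC1 (pf_fuel_pfaff _ c) // size_take_drop size_enum_ord //.
apply: eq_pfaff => a b; rewrite !nth_take_drop ?size_enum_ord //.
by rewrite (nth_ord_enum c (lift c a)) (nth_ord_enum c (lift c b)) -mx_natE.
Qed.

Lemma Pf_del2_pfaff n (M : 'M[R]_n) (c : 'I_n) (d : 'I_n.-1) (S : seq 'I_n) :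
  S =i [:: c; lift c d] ->
  Pf_del M S = pfaff n.-2 (fun a b => mx_nat M (bump c (bump d a)) (bump c (bump d b))).
Proof.
move=> defS; rewrite /Pf_del /pf_seq.
set e := enum 'I_n; set e1 := take c e ++ drop c.+1 e.
have c_lt : (c < size e)%N by rewrite size_enum_ord.
have d_lt : (d < size e1)%N by rewrite size_take_drop // size_enum_ord.
have def_d : lift c d = nth c e1 d by rewrite nth_take_drop // (nth_ord_enum c (lift c d)).
have e1_uniq : uniq e1 by rewrite /e1 /e -filter_enum_predC1; apply/filter_uniq/enum_uniq.
have -> : [seq i <- e | i \notin S] = take d e1 ++ drop d.+1 e1.
  rewrite -(filter_predC1_nth c) //.
  rewrite -def_d /e1 /e -filter_enum_predC1 -filter_predI; apply: eq_filter => i.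
  by rewrite defS !inE negb_or andbC.
rewrite (pf_fuel_pfaff _ c) // !size_take_drop ?size_enum_ord //.
apply: eq_pfaff => a b; rewrite !nth_take_drop //.
rewrite (nth_ord_enum c (lift c (lift d a))) (nth_ord_enum c (lift c (lift d b))).
by rewrite -mx_natE.
Qed.

Lemma pf_check_lift m (phi : 'M[R]_m) (i : 'I_m) (j : 'I_m.-1) :
  pf_check phi (lift i j) i = (-1) ^+ (i + j) *
    pfaff m.-2 (fun x y => mx_nat phi (bump i (bump j x)) (bump i (bump j y))).
Proof.
rewrite mxE; case: (leqP i j) => ij.
  have -> : lift i j = j.+1 :> nat by rewrite /= /bump ij.
  rewrite ltnNge (leqW ij) ltnS ij /= (Pf_del2_pfaff _ (c := i) (d := j)) => [|x] //.
  by rewrite addnS exprS mulN1r mulNr opprK.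
have -> : lift i j = j :> nat by rewrite /= /bump leqNgt ij.
rewrite ij (Pf_del2_pfaff _ (c := i) (d := j)) => [|x]; last by rewrite !inE orbC.
by rewrite addnC.
Qed.

Lemma pfaff_bordered m k (phi : 'M[R]_m) (psi : 'M[R]_(k, m)) (a b : 'I_k) c
    (B : nat -> nat -> R) :
  (forall i j : 'I_m, B i j = phi i j) ->
  (forall i : 'I_m, B i m = psi a i) -> (forall i : 'I_m, B i m.+1 = psi b i) ->
  B m m.+1 = c ->
  pfaff m.+2 B = c * Pf phi + (psi *m pf_check phi *m psi^T) a b.
Proof.
move=> Bphi Ba Bb Bc; rewrite pfaff_expand_last2 Bc Pf_pfaff.
congr (_ * _ + _); first by apply: eq_pfaff => i j; rewrite mx_natE Bphi.
rewrite mxE; apply: eq_bigr => i _.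
rewrite !mxE big_distrl (bigD1_ord i) //= mxE ltnn !mulr0 mul0r add0r.
apply: eq_bigr => j _; rewrite pf_check_lift Bb (Ba (lift i j)).
rewrite (@eq_pfaff _ _ _ (fun x y => mx_nat phi (bump i (bump j x)) (bump i (bump j y)))).
  by ring.
by move=> x y; rewrite (Bphi (lift i (lift j x)) (lift i (lift j y))) -mx_natE.
Qed.

Lemma Pf_del_mx3 (M : 'M[R]_3) (l : 'I_3) :
  Pf_del M [:: l] = M (lift l (ord0 : 'I_2)) (lift l (ord_max : 'I_2)).
Proof. by rewrite Pf_del1_pfaff pfaff2 -(mx_natE M (lift l ord0)). Qed.

Lemma Pf_del_block_rshift m (phi : 'M[R]_m) (psi : 'M[R]_(3, m)) (Phi : 'M[R]_3)
    (l : 'I_3) :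
  let a := lift l (ord0 : 'I_2) in let b := lift l (ord_max : 'I_2) in
  Pf_del (block_mx phi psi^T (- psi) Phi) [:: rshift m l] =
    Phi a b * Pf phi + (psi *m pf_check phi *m psi^T) a b.
Proof.
move=> a b; rewrite Pf_del1_pfaff (_ : (m + 3).-1 = m.+2) ?addn3 //.
have lshiftE (i : 'I_m) : bump (m + l) i = lshift 3 i.
  by rewrite /bump leqNgt (leq_trans (ltn_ord i)) ?leq_addr.
have aE : bump (m + l) m = rshift m a by rewrite /= -bumpDl addn0.
have bE : bump (m + l) m.+1 = rshift m b by rewrite /= -bumpDl addn1.
apply: pfaff_bordered => [i j|i|i|].
- by rewrite !lshiftE mx_natE block_mxEul.
- by rewrite lshiftE aE mx_natE block_mxEur mxE.
- by rewrite lshiftE bE mx_natE block_mxEur mxE.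
- by rewrite aE bE mx_natE block_mxEdr.
Qed.

End MatrixPfaffians.

Theorem mainTheorem7 (R : comPzRingType) (m : nat) (hm : ~~ odd m)
    (phi : 'M[R]_m) (psi : 'M[R]_(3, m)) (Phi : 'M[R]_3)
    (hphi : alternating phi) (hPhi : alternating Phi) (l : 'I_3) :
  let d2 : 'M[R]_(m + 3) := block_mx phi psi^T (- psi) Phi in
  Pfl d2 (rshift m l) =
    Pfl (psi *m pf_check phi *m psi^T) l + Pf phi * Pfl Phi l.
Proof.
move=> d2; rewrite /Pfl Pf_del_block_rshift !Pf_del_mx3.
have -> : (-1) ^+ (rshift m l).+2 = (-1) ^+ l.+2 :> R.
  by apply: signr_odd_eq; rewrite /= oddD (negbTE hm).
by ring.
Qed.
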